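(* Let $M$ be a monoid. Then $\mathfrak{L}(\mathrm{Val},\mathrm{CF},M^0)=\mathfrak{L}(\mathrm{Val},\mathrm{CF},M)$.
   Context: $M^0=M\cup\{0\}$ (with a new zero element adjoined) if $M$ has no zero element, and $M^0=M$ otherwise. A context-free valence grammar over a monoid $N$ is $(V,T,P,S,N)$ with nonterminals $V$, terminals $T$, start symbol $S$ and a finite set $P$ of rules $(A\to\alpha,n)$ with $A\in V$, $\alpha\in(V\cup T)^*$, $n\in N$. One step: $(w_1Aw_2,m)\Rightarrow(w_1\alpha w_2,mn)$ for a rule $(A\to\alpha,n)$. The generated language is $\{w\in T^*:(S,1)\Rightarrow^*(w,1)\}$. $\mathfrak{L}(\mathrm{Val},\mathrm{CF},N)$ is the family of languages generated by such grammars over $N$. *)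

From Stdlib Require Import Relations ClassicalDescription List.
From mathcomp Require Import all_boot.

Set Implicit Arguments.
Unset Strict Implicit.
Unset Printing Implicit Defensive.

Record monoid := Monoid {
  mcarrier :> Type;
  mop : mcarrier -> mcarrier -> mcarrier;
  munit : mcarrier;
  mopA : forall x y z, mop x (mop y z) = mop (mop x y) z;
  mop1x : forall x, mop munit x = x;
  mopx1 : forall x, mop x munit = x
}.

Definition is_zero (M : monoid) (z : M) : Prop :=
  forall m : M, mop z m = z /\ mop m z = z.

Definition has_zero (M : monoid) : Prop := exists z : M, is_zero z.

(* M with a new zero adjoined: None is the new zero. *)
Definition adj_op (M : monoid) (x y : option M) : option M :=
  match x, y with
  | Some a, Some b => Some (mop a b)
  | _, _ => None
  end.

Lemma adj_opA (M : monoid) (x y z : option M) :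
  adj_op x (adj_op y z) = adj_op (adj_op x y) z.
Proof. by case: x => [a|]; case: y => [b|]; case: z => [c|] //=; rewrite mopA. Qed.

Lemma adj_op1x (M : monoid) (x : option M) : adj_op (Some (munit M)) x = x.
Proof. by case: x => [a|] //=; rewrite mop1x. Qed.

Lemma adj_opx1 (M : monoid) (x : option M) : adj_op x (Some (munit M)) = x.
Proof. by case: x => [a|] //=; rewrite mopx1. Qed.

Definition adjoin_zero (M : monoid) : monoid :=
  @Monoid (option M) (@adj_op M) (Some (munit M))
    (@adj_opA M) (@adj_op1x M) (@adj_opx1 M).

Definition monoid0 (M : monoid) : monoid :=
  if excluded_middle_informative (has_zero M) then M else adjoin_zero M.

(* Context-free valence grammar (V, T, P, S, N): nonterminals V (finite),
   terminals T (finite), finite list of rules (A -> alpha, n), start S. *)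
Record valence_grammar (N : monoid) (T : finType) := VGrammar {
  vg_V : finType;
  vg_P : list (vg_V * list (vg_V + T) * N);
  vg_S : vg_V
}.

Definition vg_step (N : monoid) (T : finType) (G : valence_grammar N T)
    (c c' : list (vg_V G + T) * N) : Prop :=
  exists (A : vg_V G) (alpha : list (vg_V G + T)) (n : N)
         (w1 w2 : list (vg_V G + T)),
    In (A, alpha, n) (vg_P G) /\
    c = (w1 ++ inl A :: w2, c.2) /\
    c' = (w1 ++ alpha ++ w2, mop c.2 n).

Definition vg_derives (N : monoid) (T : finType) (G : valence_grammar N T)
    (c c' : list (vg_V G + T) * N) : Prop :=
  clos_refl_trans _ (@vg_step N T G) c c'.
Arguments vg_derives {N T} G c c'.

Definition vg_lang (N : monoid) (T : finType) (G : valence_grammar N T)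
    (w : list T) : Prop :=
  vg_derives G ([:: inl (vg_S G)], munit N) (map inr w, munit N).

Definition in_Val_CF (N : monoid) (T : finType) (L : list T -> Prop) : Prop :=
  exists G : valence_grammar N T, forall w, L w <-> vg_lang G w.

From mathcomp Require Import all_boot.
From Stdlib Require Import Relations ClassicalDescription List.

Set Implicit Arguments.
Unset Strict Implicit.
Unset Printing Implicit Defensive.

(* When M has no zero, M^0 = M u {0} with 0 absorbing, so a derivation
   ending with weight 1 never meets weight 0, hence never applies a rule of
   weight 0.  Deleting those rules turns a grammar over M^0 into one over M
   with the same language, and conversely every grammar over M is a grammar
   over M^0 without zero rules. *)

Section AdjoinZeroRules.

Variables (M : monoid) (T V : Type).

Definition rule_some (r : V * list (V + T) * M) : V * list (V + T) * option M :=
  (r.1, Some r.2).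

Definition rule_nonzero (r : V * list (V + T) * option M) :
    list (V * list (V + T) * M) :=
  if r.2 is Some n then [:: (r.1, n)] else [::].

Lemma In_map_rule_some (P : list (V * list (V + T) * M)) A alpha n :
  In (A, alpha, Some n) (map rule_some P) <-> In (A, alpha, n) P.
Proof.
rewrite in_map_iff; split=> [[[r m] [[<- <-]]] | HP] //.
by exists (A, alpha, n).
Qed.

Lemma In_flat_map_rule_nonzero (P0 : list (V * list (V + T) * option M)) A alpha n :
  In (A, alpha, n) (flat_map rule_nonzero P0) <-> In (A, alpha, Some n) P0.
Proof.
rewrite in_flat_map; split=> [[[r [m|]] [HP0 //= [[<- <-] | //]]] // | HP0].
by exists (A, alpha, Some n); split; last left.
Qed.

End AdjoinZeroRules.

Section LiftGrammar.

Variables (M : monoid) (T V : finType) (S : V).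
Variables (P : list (V * list (V + T) * M))
          (P0 : list (V * list (V + T) * adjoin_zero M)).
Hypothesis In_rules_some :
  forall A alpha n, In (A, alpha, Some n) P0 <-> In (A, alpha, n) P.

Let G : valence_grammar M T := VGrammar P S.
Let G0 : valence_grammar (adjoin_zero M) T := VGrammar P0 S.

Lemma vg_derives_some c c' :
  vg_derives G c c' ->
  vg_derives G0 (c.1, Some c.2 : adjoin_zero M) (c'.1, Some c'.2 : adjoin_zero M).
Proof.
elim=> {c c'}
  [c _ [A [alpha [n [w1 [w2 [HP [-> ->]]]]]]] | c | c d e _ IHcd _ IHde].
- apply: rt_step; exists A, alpha, (Some n : adjoin_zero M), w1, w2.
  by split; first exact/In_rules_some.
- exact: rt_refl.
- exact: rt_trans IHcd IHde.
Qed.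

Lemma vg_derives_of_some c c' m' :
  vg_derives G0 c c' -> c'.2 = Some m' ->
  exists2 m, c.2 = Some m & vg_derives G (c.1, m) (c'.1, m').
Proof.
move=> D; elim: D m' => {c c'}
  [c _ [A [alpha [n [w1 [w2 [HP0 [-> ->]]]]]]] | c | c d e _ IHcd _ IHde] m' /=.
- case: c.2 => [m|] //; case: n HP0 => [n|] // HP0 [<-].
  exists m => //; apply: rt_step; exists A, alpha, n, w1, w2.
  by split; first exact/In_rules_some.
- by exists m'; last exact: rt_refl.
- move=> /IHde [md /IHcd [mc Hc Dcd] Dde].
  by exists mc; last exact: rt_trans Dcd Dde.
Qed.

Lemma vg_lang_some w : vg_lang G0 w <-> vg_lang G w.
Proof.
split=> [D | D]; last exact: vg_derives_some D.
by have [m [<-]] := vg_derives_of_some D erefl.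
Qed.

End LiftGrammar.

Theorem proposition4 (M : monoid) :
  forall (T : finType) (L : list T -> Prop),
    in_Val_CF (monoid0 M) L <-> in_Val_CF M L.
Proof.
move=> T L; rewrite /monoid0.
destruct (excluded_middle_informative (has_zero M)); first by []; simpl.
split=> -[[V P S] HL].
- exists (VGrammar (flat_map (@rule_nonzero M T V) P) S) => w.
  rewrite HL; apply: vg_lang_some => A alpha k.
  by rewrite In_flat_map_rule_nonzero.
- exists (@VGrammar (adjoin_zero M) T V (map (@rule_some M T V) P) S) => w.
  rewrite HL; apply: iff_sym; apply: vg_lang_some => A alpha k.
  exact: In_map_rule_some.
Qed.
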